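(* Let $w$ be an infinite word, and let $n'<n''$ be two consecutive lengths of palindromic prefixes of $w$ (i.e. no palindromic prefix of $w$ has length strictly between them), with corresponding prefixes $\pi'$ and $\pi''$, and write $\pi''=\pi'\omega$. Then every palindromic prefix $\pi$ of $w$ with $n'\le|\pi|\le n'+n''$ can be written $\pi=\pi'\omega^t$ for some integer $t\ge0$.
   Context: Infinite words are right-infinite; a finite word is a palindrome if it equals its reversal, the empty word being a palindrome; $|u|$ is the length of $u$. *)

From mathcomp Require Import all_boot.
Set Implicit Arguments. Unset Strict Implicit. Unset Printing Implicit Defensive.

Definition pref (A : Type) (w : nat -> A) (n : nat) : seq A := mkseq w n.

Definition palindrome (A : Type) (u : seq A) : Prop := rev u = u.

Definition wpow (A : Type) (u : seq A) (t : nat) : seq A := flatten (nseq t u).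

(* Two palindromic prefixes of lengths k <= n give the prefix of length n the
   period n - k, and a palindromic prefix of length n with a period p <= n has
   a palindromic prefix of length n - p.  Let p = n2 - n1.  A palindromic
   prefix of length m in (n2, n1 + n2] has period m - n2; together with the
   period p of the prefix of length n2 this forces period p on the whole prefix
   of length m, so the prefix of length m - p is again a palindrome.  Descending
   in steps of p ends at n1 or n2, since no palindromic prefix has a length
   strictly between them; hence m = n1 + t p and the period p spells out
   pi'' = pi' omega, pi = pi' omega^t. *)

From mathcomp Require Import all_boot.
From mathcomp Require Import zify.

Set Implicit Arguments.
Unset Strict Implicit.
Unset Printing Implicit Defensive.

Lemma wpowSr (A : Type) (u : seq A) t : wpow u t.+1 = wpow u t ++ u.
Proof. by elim: t => [|t IHt]; rewrite /wpow /= ?cats0 // -catA -IHt. Qed.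

Lemma eq_in_mkseq (A : Type) (f g : nat -> A) n :
  (forall j, j < n -> f j = g j) -> mkseq f n = mkseq g n.
Proof.
move=> eq_fg; apply/eq_in_map => j; rewrite mem_iota add0n => /andP[_ lt_jn].
exact: eq_fg.
Qed.

Section PrefixPalindromes.

Variables (A : Type) (w : nat -> A).

Definition prefix_pal n := forall i, i < n -> w i = w (n.-1 - i).

Definition prefix_period n p := forall i, i + p < n -> w i = w (i + p).

Lemma palindrome_prefP n : palindrome (pref w n) <-> prefix_pal n.
Proof.
rewrite /palindrome /pref /prefix_pal; split.
- move=> pal_n i lt_in.
  have := congr1 (nth (w 0) ^~ i) pal_n.
  rewrite nth_rev size_mkseq // !nth_mkseq //; last by lia.
  by move=> <-; congr w; lia.
- move=> pal_n; apply: (@eq_from_nth _ (w 0)); first by rewrite size_rev.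
  move=> i; rewrite size_rev size_mkseq => lt_in.
  rewrite nth_rev size_mkseq // !nth_mkseq //; try lia.
  by rewrite [RHS]pal_n //; congr w; lia.
Qed.

Lemma prefix_period_pal n k :
  prefix_pal n -> prefix_pal k -> k <= n -> prefix_period n (n - k).
Proof.
move=> pal_n pal_k le_kn i lt_i.
rewrite pal_k; last by lia.
by rewrite (pal_n (i + (n - k))); [congr w | ]; lia.
Qed.

Lemma prefix_pal_period n p :
  prefix_pal n -> prefix_period n p -> p <= n -> prefix_pal (n - p).
Proof.
move=> pal_n per_n le_pn i lt_i.
rewrite per_n; last by lia.
by rewrite pal_n; [congr w | ]; lia.
Qed.

Lemma prefix_period_le n n' p :
  n' <= n -> prefix_period n p -> prefix_period n' p.
Proof. by move=> le_n'n per_n i lt_i; apply: per_n; lia. Qed.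

Lemma prefix_period_iter n p k j :
  prefix_period n p -> j + k * p < n -> w (j + k * p) = w j.
Proof.
move=> per_n; elim: k => [|k IHk] lt_jk; first by rewrite addn0.
rewrite mulSn (_ : j + (p + k * p) = j + k * p + p); last by lia.
rewrite -per_n; last by lia.
by apply: IHk; lia.
Qed.

(* For i >= q, the period q shifts both i and i + p down by q into the prefix
   of length n, where the period p applies. *)
Lemma prefix_period_extend m n p q :
  prefix_period m q -> prefix_period n p -> m <= n + q -> q + p <= n ->
  prefix_period m p.
Proof.
move=> per_mq per_np le_m le_qp i lt_i.
have [lt_ipn | le_nip] := ltnP (i + p) n; first exact: per_np.
rewrite (_ : i = i - q + q); last by lia.
rewrite -per_mq; last by lia.
rewrite (_ : i - q + q + p = i - q + p + q); last by lia.
rewrite -per_mq; last by lia.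
by apply: per_np; lia.
Qed.

Lemma prefD a b : pref w (a + b) = pref w a ++ mkseq (fun j => w (a + j)) b.
Proof.
by rewrite /pref /mkseq iotaD map_cat -[in iota a b](addn0 a) iotaDl -map_comp.
Qed.

Lemma drop_pref n m : n <= m -> drop n (pref w m) = mkseq (fun j => w (n + j)) (m - n).
Proof.
by move=> le_nm; rewrite -{1}(subnKC le_nm) prefD drop_size_cat // size_mkseq.
Qed.

Lemma pref_period_wpow n p t : prefix_period (n + t * p) p ->
  pref w (n + t * p) = pref w n ++ wpow (mkseq (fun j => w (n + j)) p) t.
Proof.
elim: t => [|t IHt] per_t; first by rewrite addn0 /wpow cats0.
have per_t' : prefix_period (n + t * p) p.
  by apply: prefix_period_le per_t; lia.
rewrite wpowSr catA -IHt // mulSn (_ : n + (p + t * p) = n + t * p + p); last by lia.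
rewrite prefD; congr (_ ++ _); apply: eq_in_mkseq => j lt_jp.
rewrite (_ : n + t * p + j = n + j + t * p); last by lia.
by rewrite (prefix_period_iter per_t) //; lia.
Qed.

Lemma prefix_pal_lengths n1 n2 :
  n1 < n2 -> prefix_pal n1 -> prefix_pal n2 ->
  (forall m, n1 < m -> m < n2 -> ~ prefix_pal m) ->
  forall m, n1 <= m -> m <= n1 + n2 -> prefix_pal m ->
  exists2 t, m = n1 + t * (n2 - n1) & prefix_period m (n2 - n1).
Proof.
move=> lt_n12 pal_n1 pal_n2 gap12.
have per_n2 : prefix_period n2 (n2 - n1) by apply: prefix_period_pal => //; lia.
elim/ltn_ind => m IHm ge_m le_m pal_m.
have [le_mn2 | lt_n2m] := leqP m n2.
  have [m_n1 | m_n2] : m = n1 \/ m = n2.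
    have [le_mn1 | lt_n1m] := leqP m n1; first by left; lia.
    have [lt_mn2 | le_n2m] := ltnP m n2; last by right; lia.
    by case: (gap12 m).
  - by exists 0; rewrite ?m_n1 ?addn0 //; apply: prefix_period_le per_n2; lia.
  - by exists 1; rewrite m_n2 //; lia.
have per_m : prefix_period m (n2 - n1).
  apply: (prefix_period_extend (q := m - n2) _ per_n2); try lia.
  by apply: prefix_period_pal => //; lia.
have pal_mp : prefix_pal (m - (n2 - n1)) by apply: prefix_pal_period => //; lia.
have [|||t eq_t _] := IHm (m - (n2 - n1)) _ _ _ pal_mp; try lia.
by exists t.+1 => //; lia.
Qed.

End PrefixPalindromes.

Theorem lemma5p4 (A : Type) (w : nat -> A) (n1 n2 : nat) :
  n1 < n2 ->
  palindrome (pref w n1) ->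
  palindrome (pref w n2) ->
  (forall m, n1 < m -> m < n2 -> ~ palindrome (pref w m)) ->
  forall m, n1 <= m -> m <= n1 + n2 -> palindrome (pref w m) ->
  exists t : nat, pref w m = pref w n1 ++ wpow (drop n1 (pref w n2)) t.
Proof.
move=> lt_n12 /palindrome_prefP pal_n1 /palindrome_prefP pal_n2 gap12.
move=> m ge_m le_m /palindrome_prefP pal_m.
have gap12' m' : n1 < m' -> m' < n2 -> ~ prefix_pal w m'.
  by move=> ? ? /palindrome_prefP; apply: gap12.
have [t -> per_m] := prefix_pal_lengths lt_n12 pal_n1 pal_n2 gap12' ge_m le_m pal_m.
by exists t; rewrite drop_pref ?pref_period_wpow //; apply: ltnW.
Qed.
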